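(* The set of pixellated $\ell_1$-convex subsets of $\mathbb{R}^n$ is dense in the space of compact $\ell_1$-convex subsets of $\mathbb{R}^n$ with respect to the Hausdorff metric.
   Context: $Q_n=[-\tfrac12,\tfrac12]^n$ and $\mathbf{H}=\{m+\tfrac12:m\in\mathbb{Z}\}$. For $\lambda>0$, a subset of $\mathbb{R}^n$ is $\lambda$-pixellated if it is a finite union of cubes $\lambda(h+Q_n)$ with $h\in\mathbf{H}^n$; it is pixellated if it is $\lambda$-pixellated for some $\lambda>0$. A subset $Z\subseteq\mathbb{R}^n$ is $\ell_1$-convex if for all $z,z'\in Z$, with $D=\sum_i|z_i-z'_i|$, there is $\gamma\colon[0,D]\to Z$ with $\gamma(0)=z,\gamma(D)=z'$ and $\sum_i|\gamma_i(t)-\gamma_i(t')|=|t-t'|$ for all $t,t'$. The Hausdorff distance between compact sets $X,Y$ is $\inf\{\delta>0:X\subseteq Y+\delta B_n,\ Y\subseteq X+\delta B_n\}$ with $B_n$ the closed unit $\ell_1$ ball. *)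

From HB Require Import structures.
From mathcomp Require Import all_boot all_order all_algebra.
From mathcomp Require Import all_classical all_reals all_analysis.
Set Implicit Arguments. Unset Strict Implicit. Unset Printing Implicit Defensive.
Import Order.TTheory GRing.Theory Num.Theory.
Import numFieldNormedType.Exports.
Local Open Scope classical_set_scope.
Local Open Scope ring_scope.

Section Defs.
Variables (R : realType) (n : nat).
Notation pt := 'rV[R]_n.

Definition l1dist (x y : pt) : R := \sum_(i < n) `|x 0 i - y 0 i|.

Definition Hhalf : set R := [set x | exists m : int, x = m%:~R + 2^-1].

Definition Qcube : set pt := [set q | forall i : 'I_n, `|q 0 i| <= 2^-1].

Definition pixel (lam : R) (h : pt) : set pt :=
  [set lam *: (h + q) | q in Qcube].

Definition lam_pixellated (lam : R) (S : set pt) : Prop :=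
  exists s : seq pt,
    (forall h, h \in s -> forall i : 'I_n, Hhalf (h 0 i)) /\
    S = [set x | exists2 h, h \in s & pixel lam h x].

Definition pixellated (S : set pt) : Prop :=
  exists2 lam : R, 0 < lam & lam_pixellated lam S.

Definition l1_convex (Z : set pt) : Prop :=
  forall z z', Z z -> Z z' ->
    let D := l1dist z z' in
    exists gamma : R -> pt,
      [/\ gamma 0 = z, gamma D = z',
          (forall t, 0 <= t <= D -> Z (gamma t)) &
          (forall t t', 0 <= t <= D -> 0 <= t' <= D ->
              l1dist (gamma t) (gamma t') = `|t - t'|)].

Definition l1ball : set pt := [set b | l1dist b 0 <= 1].

Definition l1nbhd (X : set pt) (delta : R) : set pt :=
  [set x + delta *: b | x in X & b in l1ball].

(* delta is an admissible radius in the infimum defining the Hausdorff distance *)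
Definition hausdorff_adm (X Y : set pt) (delta : R) : Prop :=
  0 < delta /\ X `<=` l1nbhd Y delta /\ Y `<=` l1nbhd X delta.

End Defs.

From HB Require Import structures.
From mathcomp Require Import all_boot all_order all_algebra.
From mathcomp Require Import all_classical all_reals all_analysis.
From mathcomp Require Import ring lra zify.
Import Order.TTheory GRing.Theory Num.Theory.
Import numFieldNormedType.Exports.
Local Open Scope classical_set_scope.
Local Open Scope ring_scope.
Set Implicit Arguments. Unset Strict Implicit. Unset Printing Implicit Defensive.

(* Approximate Z by its cell hull: the union of the closed cells of mesh lam
   that meet Z.  Each point of the hull is within n lam of Z in l1, and since Z
   is bounded the hull is a finite union of cells.  To join x and y in the hull,
   lying in cells that meet Z at z1 and z2, move coordinate by coordinate: the
   i-th coordinate moves inside the cell of x_i, then follows the i-th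
   coordinate of an l1 geodesic of Z from z1 to z2 clamped to the interval
   between x_i and y_i, then moves inside the cell of y_i.  At every time each
   coordinate shares a grid interval with the geodesic, so the point stays in a
   cell meeting Z; and a coordinatewise monotone path, reparametrised by l1
   arclength, is an l1 geodesic. *)

(* Split on the sign of every innermost norm, leaving goals for [lra]. *)
Ltac split_norms := repeat match goal with |- context [ Num.norm ?x ] =>
  tryif (match x with context [Num.norm _] => idtac end) then fail else
  (let h := fresh "h" in case: (lerP 0 x) => h;
     [rewrite (ger0_norm h) | rewrite (ltr0_norm h)]) end.

Ltac split_ifs := repeat match goal with |- context [if ?a <= ?b then _ else _] =>
  let h := fresh "h" in case: (leP a b) => h end.

(** * Monotone paths, pasting and clamping on the line *)

Section RealLine.
Variable R : realType.
Implicit Types (a b c v w s t x y D K lam : R) (f g : R -> R).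

Definition betweenr a b c := `|c - a| = `|c - b| + `|b - a|.

Lemma betweenr_le a b c : a <= c -> betweenr a b c -> a <= b <= c.
Proof. rewrite /betweenr => ?; split_norms => *; apply/andP; split; lra. Qed.

Lemma le_betweenr a b c : a <= b <= c -> betweenr a b c.
Proof. by move=> /andP[? ?]; rewrite /betweenr !ger0_norm; lra. Qed.

Lemma betweenrN a b c : betweenr a b c -> betweenr (- a) (- b) (- c).
Proof. by rewrite /betweenr -!opprD !normrN. Qed.

Definition monotone_path T f :=
  forall t t', 0 <= t -> t <= t' -> t' <= T -> betweenr (f 0) (f t) (f t').

Lemma nondecreasing_monotone_path T f :
  (forall t t', 0 <= t -> t <= t' -> t' <= T -> f t <= f t') -> monotone_path T f.
Proof.
move=> f_nd t t' t0 tt' t'T; apply: le_betweenr.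
by rewrite f_nd ?f_nd //; apply: le_trans tt' t'T.
Qed.

Lemma monotone_path_nondecreasing T f : f 0 <= f T -> monotone_path T f ->
  forall t t', 0 <= t -> t <= t' -> t' <= T -> f t <= f t'.
Proof.
move=> f0T f_mono t t' t0 tt' t'T.
have /andP[f0t _] := betweenr_le f0T (f_mono t T t0 (le_trans tt' t'T) (lexx T)).
have /andP[f0t' _] := betweenr_le f0T (f_mono t' T (le_trans t0 tt') t'T (lexx T)).
by move: f0t f0t' (f_mono t t' t0 tt' t'T); rewrite /betweenr; split_norms; lra.
Qed.

Lemma monotone_pathN T f : monotone_path T f -> monotone_path T (fun t => - f t).
Proof. by move=> f_mono t t' *; apply/betweenrN/f_mono. Qed.

Lemma lipschitzP K f :
  K.-lipschitz f <-> forall t t', `|f t - f t'| <= K * `|t - t'|.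
Proof.
by split=> [f_lip t t'|f_lip [t t'] _]; [apply: (f_lip (t, t')) | apply: f_lip].
Qed.

Lemma lipschitz_continuous K f : K.-lipschitz f -> continuous f.
Proof.
move/lipschitzP => f_lip t; apply/cvgrPdist_le => e e0.
have K1 : 0 < `|K| + 1 by rewrite ltr_pwDr // normr_ge0.
apply/nbhs_ballP; exists (e / (`|K| + 1)) => [|s]; first by rewrite /= divr_gt0.
rewrite /ball_ /= => ts; apply: le_trans (f_lip t s) _.
apply: le_trans (ler_wpM2r (normr_ge0 _) (ler_norm K)) _.
apply: le_trans (ler_wpM2l (normr_ge0 _) (ltW ts)) _.
by rewrite mulrA ler_pdivrMr // mulrDr mulr1 mulrC lerDl ltW.
Qed.

Lemma continuous_right_inverse f T D : 0 <= T -> continuous f ->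
  f 0 = 0 -> f T = D -> exists h, forall u, 0 <= u <= D -> 0 <= h u <= T /\ f (h u) = u.
Proof.
move=> T0 f_cont f0 fT.
suff /choice[h hP] : forall u, exists t, 0 <= u <= D -> 0 <= t <= T /\ f t = u.
  by exists h => u /hP.
move=> u; have [uD|] := boolP (0 <= u <= D); last by exists 0.
have f0T : Num.min (f 0) (f T) <= u <= Num.max (f 0) (f T).
  by rewrite f0 fT min_l ?max_r //; case/andP: uD => u0 uD; apply: le_trans uD.
have [t] := IVT T0 (continuous_subspaceT f_cont) f0T.
by rewrite in_itv /= => t0T ftu; exists t.
Qed.

Lemma lipschitzN K f : K.-lipschitz f -> K.-lipschitz (fun t => - f t).
Proof.
move/lipschitzP => f_lip; apply/lipschitzP => t t'.
by rewrite -opprD normrN; apply: f_lip.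
Qed.

Lemma lipschitz_le K K' f : K <= K' -> K.-lipschitz f -> K'.-lipschitz f.
Proof.
move=> KK' /lipschitzP f_lip; apply/lipschitzP => t t'.
by apply: le_trans (f_lip t t') _; rewrite ler_wpM2r.
Qed.

Definition lerp a b s := a + s * (b - a).

Lemma lerp0 a b : lerp a b 0 = a. Proof. by rewrite /lerp mul0r addr0. Qed.
Lemma lerp1 a b : lerp a b 1 = b. Proof. by rewrite /lerp mul1r addrC subrK. Qed.

Lemma lerp_lipschitz a b K : `|b - a| <= K -> K.-lipschitz (lerp a b).
Proof.
move=> abK; apply/lipschitzP => s s'; rewrite /lerp opprD addrACA subrr add0r.
by rewrite -mulrBl normrM mulrC ler_wpM2r.
Qed.

Lemma lerp_nondecreasing a b s s' : a <= b -> s <= s' -> lerp a b s <= lerp a b s'.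
Proof. by move=> ab ss'; rewrite lerD2l ler_wpM2r // subr_ge0. Qed.

Lemma lerp_betweenr a b s s' : 0 <= s -> s <= s' ->
  betweenr a (lerp a b s) (lerp a b s').
Proof.
move=> s0 ss'; have s'0 : 0 <= s' := le_trans s0 ss'.
have lerpB u v : lerp a b u - lerp a b v = (u - v) * (b - a) by rewrite /lerp; ring.
have lerpBa u : lerp a b u - a = u * (b - a) by rewrite /lerp; ring.
rewrite /betweenr !lerpBa lerpB !normrM -mulrDl.
by rewrite [`|s'|]ger0_norm // [`|s|]ger0_norm // [`|s' - s|]ger0_norm ?subr_ge0 ?subrK.
Qed.

Definition paste a f g t := if t <= a then f t else g t.

Lemma paste_l a f g t : t <= a -> paste a f g t = f t.
Proof. by rewrite /paste => ->. Qed.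

Lemma paste_r a f g t : a <= t -> f a = g a -> paste a f g t = g t.
Proof.
rewrite /paste => a_t fga; case: ifPn => // ta.
by have -> : t = a by apply/eqP; rewrite eq_le ta.
Qed.

Section Paste.
Variables (I : set R) (a : R) (f g : R -> R).
Hypotheses (Ia : I a) (fga : f a = g a).

Lemma paste_lipschitz K :
  (forall t t', I t -> I t' -> t <= a -> t' <= a -> `|f t - f t'| <= K * `|t - t'|) ->
  (forall t t', I t -> I t' -> a <= t -> a <= t' -> `|g t - g t'| <= K * `|t - t'|) ->
  forall t t', I t -> I t' -> `|paste a f g t - paste a f g t'| <= K * `|t - t'|.
Proof.
move=> f_lip g_lip.
have across t t' : I t -> I t' -> t <= a -> a <= t' ->
    `|f t - g t'| <= K * `|t - t'|.
  move=> It It' ta a_t'; have -> : K * `|t - t'| = K * `|t - a| + K * `|a - t'|.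
    by rewrite -mulrDr; congr (_ * _); split_norms; lra.
  apply: le_trans (ler_distD (f a) _ _) (lerD _ _); first exact: f_lip.
  by rewrite fga; apply: g_lip.
move=> t t' It It'; rewrite /paste.
case: (lerP t a) => ta; case: (lerP t' a) => t'a.
- exact: f_lip.
- exact: across (ltW t'a).
- by rewrite distrC [`|t - t'|]distrC; apply: across (ltW ta).
- by apply: g_lip => //; apply: ltW.
Qed.

Lemma paste_nondecreasing :
  (forall t t', I t -> I t' -> t <= t' -> t' <= a -> f t <= f t') ->
  (forall t t', I t -> I t' -> a <= t -> t <= t' -> g t <= g t') ->
  forall t t', I t -> I t' -> t <= t' -> paste a f g t <= paste a f g t'.
Proof.
move=> f_nd g_nd t t' It It' tt'; rewrite /paste.
case: (lerP t a) => ta; case: (lerP t' a) => t'a.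
- exact: f_nd.
- by apply: (le_trans (f_nd t a _ _ _ _)); rewrite // fga g_nd // ltW.
- lra.
- by apply: g_nd => //; apply: ltW.
Qed.

End Paste.

Definition clamp a b v := if v <= a then a else if b <= v then b else v.

Lemma clamp_lipschitz a b : a <= b -> 1.-lipschitz (clamp a b).
Proof. by move=> ab [v w] _ /=; rewrite mul1r /clamp; split_ifs; split_norms; lra. Qed.

Lemma clamp_itv a b v : a <= b -> a <= clamp a b v <= b.
Proof. by move=> ab; rewrite /clamp; split_ifs; apply/andP; split; lra. Qed.

Lemma clamp_le a b v w : a <= w -> v <= w -> clamp a b v <= w.
Proof. by move=> aw vw; rewrite /clamp; split_ifs; lra. Qed.

Lemma le_clamp a b v w : w <= b -> w <= v -> w <= clamp a b v.
Proof. by move=> wb wv; rewrite /clamp; split_ifs; lra. Qed.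

Lemma clamp_nondecreasing a b v w : a <= b -> v <= w -> clamp a b v <= clamp a b w.
Proof. by move=> ab vw; rewrite /clamp; split_ifs; lra. Qed.

Lemma lipschitz01 D g s s' : D.-lipschitz_(`[0, 1]) g ->
  0 <= s <= 1 -> 0 <= s' <= 1 -> `|g s - g s'| <= D * `|s - s'|.
Proof. by move=> g_lip s01 s'01; apply: (g_lip (s, s')); split; rewrite /= in_itv. Qed.

(** * Grid cells *)

Definition in_cell lam (m : int) v := m%:~R * lam <= v <= m%:~R * lam + lam.

Lemma in_cell_floor lam v : 0 < lam -> in_cell lam (Num.floor (v / lam)) v.
Proof.
move=> lam0; rewrite /in_cell -ler_pdivlMr // floor_le /=.
rewrite -[X in _ <= _ + X]mul1r -mulrDl -ler_pdivrMr // -intrD1.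
exact/ltW/floorD1_gt.
Qed.

Lemma in_cellN lam m v : in_cell lam (- m - 1) (- v) = in_cell lam m v.
Proof.
rewrite /in_cell rmorphB rmorphN /=; move: (m%:~R : R) => r.
by apply/idP/idP => /andP[? ?]; apply/andP; split; nra.
Qed.

Lemma in_cell_bound lam M (N : nat) m v : 0 < lam -> M / lam + 1 <= N%:R ->
  `|v| <= M -> in_cell lam m v -> (- N%:Z <= m <= N%:Z)%R.
Proof.
move=> lam0 MN vM /andP[v_lo v_hi].
have m_le : m%:~R <= M / lam by rewrite ler_pdivlMr //; move: vM; split_norms; lra.
have m_ge : - (M / lam) <= m%:~R + 1.
  by rewrite lerNl ler_pdivlMr // mulNr mulrDl mul1r; move: vM; split_norms; lra.
by rewrite -(ler_int R) -(ler_int R) rmorphN /=; apply/andP; split; lra.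
Qed.

Lemma in_cell_centerE lam m v : 0 < lam ->
  in_cell lam m v = (`|v / lam - (m%:~R + 2^-1)| <= 2^-1).
Proof.
move=> lam0; have -> : (`|v / lam - (m%:~R + 2^-1)| <= 2^-1) =
    (m%:~R <= v / lam <= m%:~R + 1).
  by rewrite ler_norml; apply/idP/idP => /andP[? ?]; apply/andP; split; lra.
by rewrite ler_pdivlMr // ler_pdivrMr // mulrDl mul1r.
Qed.

Lemma in_cell_dist lam m v w : in_cell lam m v -> in_cell lam m w -> `|v - w| <= lam.
Proof. by rewrite /in_cell => /andP[? ?] /andP[? ?]; split_norms; lra. Qed.

Lemma in_cell_lt lam (m1 m2 : int) : 0 < lam -> (m1 < m2)%R ->
  m1%:~R * lam + lam <= m2%:~R * lam.
Proof.
move=> lam0 m12; have : (m1 + 1)%:~R <= m2%:~R :> R by rewrite ler_int lezD1.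
by rewrite intrD => ?; nra.
Qed.

Lemma in_cell_betweenr lam m a b c :
  betweenr a b c -> in_cell lam m a -> in_cell lam m c -> in_cell lam m b.
Proof.
rewrite /betweenr /in_cell => abc /andP[? ?] /andP[? ?].
by move: abc; split_norms => *; apply/andP; split; lra.
Qed.

Lemma lerp_in_cell lam m a b s : in_cell lam m a -> in_cell lam m b ->
  0 <= s <= 1 -> in_cell lam m (lerp a b s).
Proof.
move=> a_m b_m /andP[s0 s1].
have := in_cell_betweenr (lerp_betweenr a b s0 s1) a_m.
by rewrite lerp1; apply.
Qed.

Lemma clamp_in_cell lam (m1 m2 : int) x y (z1 z2 v : R) : 0 < lam ->
  in_cell lam m1 x -> in_cell lam m1 z1 -> in_cell lam m2 y -> in_cell lam m2 z2 ->
  z1 <= v <= z2 -> exists m, in_cell lam m (clamp x y v) /\ in_cell lam m v.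
Proof.
rewrite /in_cell => lam0 /andP[? ?] /andP[? ?] /andP[? ?] /andP[? ?] /andP[? ?].
rewrite /clamp; split_ifs.
- by exists m1; split; apply/andP; split; lra.
- by exists m2; split; apply/andP; split; lra.
- by exists (Num.floor (v / lam)); split; apply: in_cell_floor.
Qed.

(** * Shadowing a monotone arc through grid cells *)

Definition monotone_arc D (z1 z2 : R) g :=
  [/\ g 0 = z1, g 1 = z2, 0 <= D, D.-lipschitz_(`[0, 1]) g & monotone_path 1 g].

Definition shadow lam (m1 m2 : int) x y K g (sig : R -> R) :=
  [/\ sig 0 = x, sig 3 = y, K.-lipschitz sig, monotone_path 3 sig &
   [/\ forall t, 0 <= t <= 1 -> in_cell lam m1 (sig t),
       forall t, 1 <= t <= 2 ->
         exists m, in_cell lam m (sig t) /\ in_cell lam m (g (t - 1)) &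
       forall t, 2 <= t <= 3 -> in_cell lam m2 (sig t)]].

End RealLine.

Section ShadowDistinctCells.
Variables (R : realType) (lam : R) (m1 m2 : int) (x y z1 z2 D : R) (g : R -> R).
Hypotheses (lam0 : 0 < lam) (m12 : (m1 < m2)%R)
  (x_m1 : in_cell lam m1 x) (z1_m1 : in_cell lam m1 z1)
  (y_m2 : in_cell lam m2 y) (z2_m2 : in_cell lam m2 z2)
  (g_arc : monotone_arc D z1 z2 g).

Let cells_le v w : in_cell lam m1 v -> in_cell lam m2 w -> v <= w.
Proof. by move=> /andP[_ ?] /andP[? _]; have := in_cell_lt lam0 m12; lra. Qed.

Let xy : x <= y := cells_le x_m1 y_m2.

Let g_nondecreasing s s' : 0 <= s -> s <= s' -> s' <= 1 -> g s <= g s'.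
Proof.
case: g_arc => g0 g1 _ _ g_mono; apply: monotone_path_nondecreasing => //.
by rewrite g0 g1; apply: cells_le.
Qed.

Let g_itv s : 0 <= s <= 1 -> z1 <= g s <= z2.
Proof.
case: g_arc => g0 g1 _ _ _ /andP[s0 s1].
by rewrite -g0 -g1 !g_nondecreasing.
Qed.

Let p := clamp x y z1.
Let q := clamp x y z2.
Let p_m1 : in_cell lam m1 p.
Proof.
move: x_m1 z1_m1 => /andP[x_lo x_hi] /andP[_ z1_hi].
have /andP[xp _] : x <= p <= y := clamp_itv z1 xy.
by apply/andP; split; [exact: le_trans x_lo xp | exact: clamp_le].
Qed.

Let q_m2 : in_cell lam m2 q.
Proof.
move: y_m2 z2_m2 => /andP[y_lo y_hi] /andP[z2_lo _].
have /andP[_ qy] : x <= q <= y := clamp_itv z2 xy.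
by apply/andP; split; [exact: le_clamp | exact: le_trans qy y_hi].
Qed.

(* Move inside the cell of [x] to the clamped start of the arc, follow the arc
   clamped to [[x, y]], then move inside the cell of [y]. *)
Let B t := clamp x y (g (t - 1)).
Let C t := lerp q y (t - 2).
Let sig := paste 1 (lerp x p) (paste 2 B C).

Let join2 : B 2 = C 2.
Proof.
case: g_arc => _ g1 _ _ _; rewrite /B /C /= subrr lerp0.
by rewrite (_ : 2 - 1 = 1 :> R) ?g1 //; lra.
Qed.

Let join1 : lerp x p 1 = paste 2 B C 1.
Proof.
by case: g_arc => g0 _ _ _ _; rewrite lerp1 paste_l /B /= ?subrr ?g0 // ler1n.
Qed.

Let sig_B t : 1 <= t <= 2 -> sig t = B t.
Proof. by move=> /andP[t1 t2]; rewrite /sig (paste_r _ join1) // paste_l. Qed.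

Let sig_C t : 2 <= t -> sig t = C t.
Proof.
move=> t2; rewrite /sig (paste_r _ join1) ?(paste_r _ join2) //.
by apply: le_trans _ t2; rewrite ler1n.
Qed.

Let sig_lipschitz : (D + `|y - x|).-lipschitz sig.
Proof.
case: g_arc => _ _ D0 g_lip _.
have /andP[xp py] : x <= p <= y := clamp_itv z1 xy.
have /andP[xq qy] : x <= q <= y := clamp_itv z2 xy.
have xyK : `|y - x| <= D + `|y - x| by rewrite lerDr.
have pxK : `|p - x| <= D + `|y - x| by apply: le_trans xyK; rewrite !ger0_norm; lra.
have yqK : `|y - q| <= D + `|y - x| by apply: le_trans xyK; rewrite !ger0_norm; lra.
have B_lip t t' : 1 <= t -> 1 <= t' -> t <= 2 -> t' <= 2 ->
    `|B t - B t'| <= (D + `|y - x|) * `|t - t'|.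
  move=> *; apply: le_trans ((lipschitzP _ _).1 (clamp_lipschitz xy) _ _) _.
  rewrite mul1r; apply: le_trans (lipschitz01 g_lip _ _) _;
    try by apply/andP; split; lra.
  rewrite (_ : t - 1 - (t' - 1) = t - t'); last ring.
  by apply: ler_wpM2r; rewrite ?lerDl.
have C_lip t t' : `|C t - C t'| <= (D + `|y - x|) * `|t - t'|.
  apply: le_trans ((lipschitzP _ _).1 (lerp_lipschitz yqK) _ _) _.
  by rewrite (_ : t - 2 - (t' - 2) = t - t') //; ring.
apply/lipschitzP => t t'; apply: (@paste_lipschitz R setT 1 _ _ _ join1) => //.
  by move=> u u' *; apply/(lipschitzP _ _).1/lerp_lipschitz.
move=> u u' _ _ u1 u'1.
apply: (@paste_lipschitz R [set t | 1 <= t] 2 B C _ join2) => //=.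
by rewrite ler1n.
Qed.

Let sig_nondecreasing t t' : t <= t' -> sig t <= sig t'.
Proof.
have /andP[xp _] : x <= p <= y := clamp_itv z1 xy.
have /andP[_ qy] : x <= q <= y := clamp_itv z2 xy.
move=> tt'; apply: (@paste_nondecreasing R setT 1 _ _ _ join1) => //.
  by move=> u u' _ _ uu' _; apply: lerp_nondecreasing.
move=> u u' _ _ u1 uu'.
apply: (@paste_nondecreasing R [set t | 1 <= t] 2 B C _ join2) => //=.
- by rewrite ler1n.
- move=> v v' v1 _ vv' v'2; apply: clamp_nondecreasing => //.
  by apply: g_nondecreasing; lra.
- by move=> v v' _ _ _ vv'; apply: lerp_nondecreasing; rewrite // lerD2r.
- exact: le_trans u1 uu'.
Qed.

Lemma shadow_lt : exists sig, shadow lam m1 m2 x y (D + `|y - x|) g sig.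
Proof.
exists sig; split.
- by rewrite /sig paste_l ?lerp0 // ler01.
- by rewrite sig_C /C /= ?ler_nat // (_ : 3 - 2 = 1 :> R) ?lerp1 //; ring.
- exact: sig_lipschitz.
- by apply: nondecreasing_monotone_path => t t' _ tt' _; apply: sig_nondecreasing.
split.
- move=> t /andP[t0 t1]; rewrite /sig paste_l //.
  by apply: lerp_in_cell => //; apply/andP.
- move=> t /andP[t1 t2]; rewrite sig_B /B; last by apply/andP.
  apply: (clamp_in_cell lam0 x_m1 z1_m1 y_m2 z2_m2).
  by apply: g_itv; apply/andP; split; lra.
- move=> t /andP[t2 t3]; rewrite sig_C // /C.
  by apply: lerp_in_cell => //; apply/andP; split; lra.
Qed.

End ShadowDistinctCells.

(* Within a single cell: wait at [x] until time [2], then move straight to [y]. *)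
Lemma shadow_eq (R : realType) lam (m : int) (x y z1 z2 D : R) (g : R -> R) :
  in_cell lam m x -> in_cell lam m z1 -> in_cell lam m y -> in_cell lam m z2 ->
  monotone_arc D z1 z2 g -> exists sig, shadow lam m m x y (D + `|y - x|) g sig.
Proof.
move=> x_m z1_m y_m z2_m [g0 g1 D0 _ g_mono].
pose s (t : R) := clamp 0 1 (t - 2).
have s_itv t : 0 <= s t <= 1 := clamp_itv _ ler01.
have s_lo t : t <= 2 -> s t = 0 by rewrite /s /clamp => ?; case: ifP => //; lra.
have s3 : s 3 = 1 by rewrite /s /clamp; case: ifP; [lra | case: ifP => //; lra].
have x_eq t : t <= 2 -> lerp x y (s t) = x by move/s_lo ->; rewrite lerp0.
exists (fun t => lerp x y (s t)); split.
- by rewrite x_eq //; lra.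
- by rewrite s3 lerp1.
- apply/lipschitzP => t t'.
  apply: le_trans ((lipschitzP _ _).1 (lerp_lipschitz (lexx _)) _ _) _.
  apply: ler_pM; rewrite ?normr_ge0 ?lerDr //.
  apply: le_trans ((lipschitzP _ _).1 (clamp_lipschitz ler01) _ _) _.
  by rewrite mul1r opprB addrA subrK.
- move=> t t' _ tt' _; rewrite (x_eq 0); last lra.
  apply: lerp_betweenr; first by case/andP: (s_itv t).
  by apply: clamp_nondecreasing; rewrite ?ler01 ?lerD2r.
split.
- by move=> t /andP[_ t1]; rewrite x_eq //; lra.
- move=> t /andP[t1 t2]; exists m; rewrite x_eq //; split => //.
  apply: (in_cell_betweenr _ z1_m z2_m); rewrite -g0 -g1.
  by apply: g_mono; lra.
- by move=> t _; apply: lerp_in_cell.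
Qed.

Lemma monotone_arcN (R : realType) (D z1 z2 : R) g :
  monotone_arc D z1 z2 g -> monotone_arc D (- z1) (- z2) (fun s => - g s).
Proof.
case=> g0 g1 D0 g_lip g_mono; split; rewrite ?g0 ?g1 //.
- by move=> [s s'] ss' /=; rewrite -opprD normrN; apply: (g_lip (s, s') ss').
- exact: monotone_pathN.
Qed.

Lemma shadowN (R : realType) lam (m1 m2 : int) (x y K : R) g sig :
  shadow lam (- m1 - 1) (- m2 - 1) (- x) (- y) K (fun s => - g s) sig ->
  shadow lam m1 m2 x y K g (fun t => - sig t).
Proof.
case=> sig0 sig3 sig_lip sig_mono [cell1 cell12 cell2]; split.
- by rewrite sig0 opprK.
- by rewrite sig3 opprK.
- exact: lipschitzN.
- exact: monotone_pathN.
split.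
- by move=> t /cell1 ?; rewrite -in_cellN opprK.
- move=> t /cell12[m [sig_m g_m]]; exists (- m - 1).
  by split; [rewrite in_cellN | rewrite -[g _]opprK in_cellN].
- by move=> t /cell2 ?; rewrite -in_cellN opprK.
Qed.

(* Decreasing cells reduce to increasing ones under [v |-> - v], which maps
   the cell [m] onto the cell [- m - 1]. *)
Lemma shadow_exists (R : realType) lam (m1 m2 : int) (x y z1 z2 D : R) g :
  0 < lam -> in_cell lam m1 x -> in_cell lam m1 z1 ->
  in_cell lam m2 y -> in_cell lam m2 z2 -> monotone_arc D z1 z2 g ->
  exists sig, shadow lam m1 m2 x y (D + `|y - x|) g sig.
Proof.
move=> lam0 x_m1 z1_m1 y_m2 z2_m2 g_arc.
case: (ltgtP m1 m2) => [m12|m21|m12].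
- exact: shadow_lt lam0 m12 x_m1 z1_m1 y_m2 z2_m2 g_arc.
- have [sig sig_sh] : exists sig, shadow lam (- m1 - 1) (- m2 - 1) (- x) (- y)
      (D + `|- y - - x|) (fun s => - g s) sig.
    by apply: (shadow_lt lam0 _ _ _ _ _ (monotone_arcN g_arc));
      rewrite ?in_cellN //; lia.
  exists (fun t => - sig t); apply: shadowN.
  by rewrite (_ : `|y - x| = `|- y - - x|) // -normrN opprD.
- move: y_m2 z2_m2; rewrite -m12 => y_m1 z2_m1.
  exact: shadow_eq x_m1 z1_m1 y_m1 z2_m1 g_arc.
Qed.

(** * l1 geodesics *)

Section L1Geometry.
Variables (R : realType) (n : nat).
Notation pt := 'rV[R]_n.
Implicit Types (x y z : pt) (Z P : set pt).

Lemma l1distC x y : l1dist x y = l1dist y x.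
Proof. by apply: eq_bigr => i _; rewrite distrC. Qed.

Lemma l1dist_ge0 x y : 0 <= l1dist x y.
Proof. exact: sumr_ge0. Qed.

Lemma l1distxx x : l1dist x x = 0.
Proof. by apply: big1 => i _; rewrite subrr normr0. Qed.

Lemma l1dist_eq0 x y : l1dist x y = 0 -> x = y.
Proof.
move=> /psumr_eq0P xy; apply/matrixP => i j; rewrite (ord1 i).
by apply/eqP; rewrite -subr_eq0 -normr_eq0; apply/eqP/xy.
Qed.

Lemma l1dist_coord_le x y i : `|x 0 i - y 0 i| <= l1dist x y.
Proof. by rewrite /l1dist (bigD1 i) //= lerDl; apply: sumr_ge0. Qed.

Lemma l1dist_betweenr x y z :
  l1dist z x = l1dist z y + l1dist y x -> forall i, betweenr (x 0 i) (y 0 i) (z 0 i).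
Proof.
rewrite /l1dist -big_split /= => xyz.
have gap0 : \sum_(i < n) (`|z 0 i - y 0 i| + `|y 0 i - x 0 i| - `|z 0 i - x 0 i|) = 0.
  by rewrite sumrB xyz subrr.
move=> i; apply/eqP; rewrite eq_sym -subr_eq0; apply/eqP.
apply: (psumr_eq0P _ gap0) => // j _.
by rewrite subr_ge0 (le_trans _ (ler_distD (y 0 j) _ _)).
Qed.

Lemma l1dist_scale c x z : l1dist (c *: (x - z)) 0 = `|c| * l1dist x z.
Proof.
by rewrite /l1dist mulr_sumr; apply: eq_bigr => i _; rewrite !mxE subr0 normrM.
Qed.

Definition l1_geodesic Z z z' (gamma : R -> pt) :=
  [/\ gamma 0 = z, gamma (l1dist z z') = z',
      forall t, 0 <= t <= l1dist z z' -> Z (gamma t) &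
      forall t t', 0 <= t <= l1dist z z' -> 0 <= t' <= l1dist z z' ->
        l1dist (gamma t) (gamma t') = `|t - t'|].

Lemma l1_convexP Z :
  l1_convex Z <-> forall z z', Z z -> Z z' -> exists gamma, l1_geodesic Z z z' gamma.
Proof. by []. Qed.

(* Reparametrise a coordinatewise monotone path by its l1 arclength [S],
   which is additive along the path; the IVT inverts [S]. *)
Lemma l1_geodesic_of_monotone_path P x y (sig : R -> pt) (T K : R) :
  0 <= T -> sig 0 = x -> sig T = y -> (forall t, 0 <= t <= T -> P (sig t)) ->
  (forall i, K.-lipschitz (fun t => sig t 0 i)) ->
  (forall i, monotone_path T (fun t => sig t 0 i)) ->
  exists gamma, l1_geodesic P x y gamma.
Proof.
move=> T0 sig0 sigT sigP sig_lip sig_mono; set D := l1dist x y.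
pose S t := l1dist (sig t) x.
have S_add t t' : 0 <= t -> t <= t' -> t' <= T ->
    S t' = l1dist (sig t') (sig t) + S t.
  move=> t0 tt' t'T; rewrite /S /l1dist -big_split; apply: eq_bigr => i _.
  by have := sig_mono i t t' t0 tt' t'T; rewrite /betweenr /= sig0.
have S_cont : continuous S.
  apply: (@lipschitz_continuous _ (K *+ n)); apply/lipschitzP => t t'.
  rewrite /S /l1dist -sumrB; apply: le_trans (ler_norm_sum _ _ _) _.
  apply: le_trans (_ : _ <= \sum_(i < n) K * `|t - t'|) _; last first.
    by rewrite sumr_const card_ord mulrnAl.
  apply: ler_sum => i _.
  apply: le_trans (ler_dist_dist _ _) _; rewrite opprB addrA subrK.
  exact: (lipschitzP _ _).1 (sig_lip i) t t'.
have [f f_spec] : exists f, forall u, 0 <= u <= D -> 0 <= f u <= T /\ S (f u) = u.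
  apply: continuous_right_inverse => //; last by rewrite /S sigT l1distC.
  by rewrite /S sig0 l1distxx.
have S_inj t : 0 <= t <= T -> S t = S T -> sig t = y.
  case/andP=> t0 tT StT; rewrite -sigT; apply/esym/l1dist_eq0.
  by have := S_add t T t0 tT (lexx T); rewrite StT; lra.
exists (sig \o f); split => /=.
- have D0 : (0 : R) <= 0 <= D by apply/andP; split => //; apply: l1dist_ge0.
  by have [_ /l1dist_eq0] := f_spec 0 D0.
- have DD : 0 <= D <= D by apply/andP; split => //; apply: l1dist_ge0.
  have [fD SfD] := f_spec D DD.
  by apply: S_inj; rewrite // SfD /S sigT l1distC.
- by move=> t /f_spec[/sigP].
- move=> t t' /f_spec[/andP[ft0 ftT] Sft] /f_spec[/andP[ft'0 ft'T] Sft'].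
  have [ff'|f'f] := lerP (f t) (f t').
    have := S_add _ _ ft0 ff' ft'T; rewrite Sft Sft' l1distC.
    have := l1dist_ge0 (sig (f t)) (sig (f t')); split_norms; lra.
  have := S_add _ _ ft'0 (ltW f'f) ftT; rewrite Sft Sft'.
  have := l1dist_ge0 (sig (f t)) (sig (f t')); split_norms; lra.
Qed.

End L1Geometry.

(** * The cell hull *)

Section CellHull.
Variables (R : realType) (n : nat).
Notation pt := 'rV[R]_n.
Implicit Types (x y z : pt) (Z P : set pt).

Lemma l1_geodesic_coord Z z z' gam i : l1_geodesic Z z z' gam ->
  monotone_arc (l1dist z z') (z 0 i) (z' 0 i) (fun s => gam (l1dist z z' * s) 0 i).
Proof.
case=> gam0 gamD _ gam_iso; set D := l1dist z z'.
have D0 : 0 <= D := l1dist_ge0 z z'.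
have scale01 s : 0 <= s <= 1 -> 0 <= D * s <= D.
  case/andP=> s0 s1; rewrite mulr_ge0 //= -{2}[D]mulr1.
  exact: ler_wpM2l.
split => //.
- by rewrite mulr0 gam0.
- by rewrite mulr1 gamD.
- move=> [s s'] [/=]; rewrite !in_itv /= => s01 s'01.
  apply: le_trans (l1dist_coord_le _ _ i) _.
  by rewrite gam_iso ?scale01 // -mulrBr normrM ger0_norm.
- move=> s s' s0 ss' s'1; apply: l1dist_betweenr.
  have s01 : 0 <= s <= 1 by rewrite s0 (le_trans ss').
  have s'01 : 0 <= s' <= 1 by rewrite (le_trans s0 ss').
  rewrite !gam_iso ?scale01 ?lexx ?ler01 //.
  have : D * s <= D * s' by apply: ler_wpM2l.
  have /andP[? _] := scale01 s s01; rewrite mulr0.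
  by split_norms; lra.
Qed.

Definition in_grid_cell lam (m : 'I_n -> int) x := forall i, in_cell lam (m i) (x 0 i).

Definition cell_hull Z lam : set pt :=
  [set x | exists m, in_grid_cell lam m x /\ exists2 z, Z z & in_grid_cell lam m z].

Lemma cell_hull_l1_convex Z lam : 0 < lam -> l1_convex Z -> l1_convex (cell_hull Z lam).
Proof.
move=> lam0 /l1_convexP Z_cvx; apply/l1_convexP.
move=> x y [m1 [x_m1 [z1 Zz1 z1_m1]]] [m2 [y_m2 [z2 Zz2 z2_m2]]].
have [gam gam_geo] := Z_cvx z1 z2 Zz1 Zz2; set D := l1dist z1 z2.
have [sig sig_sh] := choice (fun i => shadow_exists lam0 (x_m1 i) (z1_m1 i)
  (y_m2 i) (z2_m2 i) (l1_geodesic_coord i gam_geo)).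
pose path t : pt := \row_i sig i t.
have pathE i : (fun t => path t 0 i) = sig i by apply/funext => t; rewrite mxE.
have path_end t (v : pt) : (forall i, sig i t = v 0 i) -> path t = v.
  by move=> sig_v; apply/matrixP => a i; rewrite (ord1 a) mxE.
apply: (@l1_geodesic_of_monotone_path _ _ _ x y path 3 (D + l1dist x y)).
- by rewrite ler0n.
- by apply: path_end => i; case: (sig_sh i).
- by apply: path_end => i; case: (sig_sh i).
- move=> t /andP[t0 t3].
  have [t1|lt1t] := lerP t 1.
    exists m1; split; last by exists z1.
    by move=> i; rewrite mxE; case: (sig_sh i) => _ _ _ _ [+ _ _]; apply; apply/andP.
  have [t2|ltt2] := lerP 2 t.
    exists m2; split; last by exists z2.
    by move=> i; rewrite mxE; case: (sig_sh i) => _ _ _ _ [_ _ +]; apply; apply/andP.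
  have t12 : 1 <= t <= 2 by rewrite !ltW.
  have [m m_spec] := choice (fun i =>
    let: And5 _ _ _ _ (And3 _ cell12 _) := sig_sh i in cell12 t t12).
  exists m; split; first by move=> i; rewrite mxE; case: (m_spec i).
  exists (gam (D * (t - 1))); last by move=> i; case: (m_spec i).
  case: gam_geo => _ _ gamZ _; apply: gamZ.
  apply/andP; split; first by rewrite mulr_ge0 ?l1dist_ge0 // subr_ge0 ltW.
  by apply: ler_piMr; [exact: l1dist_ge0 | lra].
- move=> i; rewrite pathE; case: (sig_sh i) => _ _ sig_lip _ _.
  apply: lipschitz_le sig_lip; rewrite lerD2l l1distC.
  exact: l1dist_coord_le.
- by move=> i; rewrite pathE; case: (sig_sh i).
Qed.

Definition cell_center (m : 'I_n -> int) : pt := \row_i ((m i)%:~R + 2^-1).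

Lemma pixel_cell_center lam m x : 0 < lam ->
  pixel lam (cell_center m) x <-> in_grid_cell lam m x.
Proof.
move=> lam0; split.
  move=> [q q_cube <-] i; rewrite in_cell_centerE // !mxE mulrC mulKf ?gt_eqF //.
  by rewrite [_ + q 0 i]addrC addrK; apply: q_cube.
move=> x_m; exists (lam^-1 *: x - cell_center m).
  by move=> i; have := x_m i; rewrite in_cell_centerE // !mxE mulrC.
by rewrite addrC subrK scalerA mulfV ?scale1r // gt_eqF.
Qed.

Lemma cell_hull_pixellated Z lam M : 0 < lam ->
  (forall z, Z z -> forall i, `|z 0 i| <= M) -> lam_pixellated lam (cell_hull Z lam).
Proof.
move=> lam0 ZM; set N := (Num.truncn (M / lam + 1)).+1.
have MN : M / lam + 1 <= N%:R by apply/ltW/truncnS_gt.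
pose idx (f : {ffun 'I_n -> 'I_(N.*2.+1)}) i : int := (f i : nat)%:Z - N%:Z.
pose meets m := `[< exists2 z, Z z & in_grid_cell lam m z >].
exists [seq cell_center (idx f)
          | f <- enum {ffun 'I_n -> 'I_(N.*2.+1)} & meets (idx f)].
split.
  by move=> h /mapP[f _ ->] i; rewrite mxE; exists (idx f i).
apply/seteqP; split => x.
  move=> [m [x_m [z Zz z_m]]].
  pose f := [ffun i => inord (absz (m i + N%:Z)) : 'I_(N.*2.+1)].
  have idx_f : idx f = m.
    apply/funext => i; have /andP[? ?] := in_cell_bound lam0 MN (ZM z Zz i) (z_m i).
    by rewrite /idx ffunE inordK; lia.
  exists (cell_center (idx f)); last by rewrite idx_f; apply/pixel_cell_center.
  by apply: map_f; rewrite mem_filter mem_enum andbT idx_f; apply/asboolP; exists z.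
move=> [h /mapP[f]]; rewrite mem_filter => /andP[/asboolP[z Zz z_m] _] -> x_f.
by exists (idx f); split => //; [apply/(pixel_cell_center _ _ lam0) | exists z].
Qed.

Lemma sub_cell_hull Z lam : 0 < lam -> Z `<=` cell_hull Z lam.
Proof.
move=> lam0 z Zz; exists (fun i => Num.floor (z 0 i / lam)).
by split; last exists z; move=> // i; apply: in_cell_floor.
Qed.

Lemma cell_hull_l1dist Z lam x : cell_hull Z lam x ->
  exists2 z, Z z & l1dist x z <= n%:R * lam.
Proof.
move=> [m [x_m [z Zz z_m]]]; exists z => //.
rewrite -[n in n%:R]card_ord mulr_natl -sumr_const.
by apply: ler_sum => i _; apply: in_cell_dist.
Qed.

Lemma l1nbhd_l1dist Z delta x z : 0 < delta -> Z z -> l1dist x z <= delta ->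
  l1nbhd Z delta x.
Proof.
move=> delta0 Zz xz; exists z => //; exists (delta^-1 *: (x - z)).
  rewrite /l1ball /= l1dist_scale ger0_norm; last by rewrite invr_ge0 ltW.
  by rewrite mulrC ler_pdivrMr // mul1r.
by rewrite scalerA mulfV ?scale1r ?gt_eqF // addrC subrK.
Qed.

Lemma compact_coord_bound Z : compact Z ->
  exists M, forall z, Z z -> forall i, `|z 0 i| <= M.
Proof.
move=> cZ; have [M _ ZM] := ex_strict_bound_gt0 (compact_bounded cZ).
exists M => z Zz i; apply: le_trans (ltW (ZM z Zz)).
rewrite [X in _ <= X]/Num.norm /= mx_normrE.
exact: (le_bigmax 0 (fun ij : 'I_1 * 'I_n => `|z ij.1 ij.2|) (0, i)).
Qed.

End CellHull.

Theorem theorem3p2 (R : realType) (n : nat) (Z : set 'rV[R]_n) :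
  compact Z -> l1_convex Z ->
  forall eps : R, 0 < eps ->
  exists P : set 'rV[R]_n,
    [/\ pixellated P, l1_convex P &
        exists delta : R, delta < eps /\ hausdorff_adm Z P delta].
Proof.
move=> cZ Z_cvx eps eps0; have [M ZM] := compact_coord_bound cZ.
pose delta := eps / 2; have delta0 : 0 < delta by rewrite divr_gt0.
pose lam := delta / n.+1%:R; have lam0 : 0 < lam by rewrite divr_gt0.
have cell_diam : n%:R * lam <= delta.
  by rewrite /lam mulrCA ger_pMr // ler_pdivrMr ?ltr0n // mul1r ler_nat.
exists (cell_hull Z lam); split.
- by exists lam => //; apply: cell_hull_pixellated ZM.
- exact: cell_hull_l1_convex.
exists delta; split; first by rewrite /delta; lra.
split => //; split => x.
- move=> Zx; apply: (l1nbhd_l1dist delta0 (sub_cell_hull lam0 Zx)).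
  by rewrite l1distxx ltW.
- case/cell_hull_l1dist => z Zz xz.
  exact: (l1nbhd_l1dist delta0 Zz (le_trans xz _)).
Qed.
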